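(* Let $T>0$, let $H(t,p)\in C^1([0,T]\times\mathbb{R}^n)$ and let $\sigma\in C^1(\mathbb{R}^n)$ be convex and Lipschitz. Suppose that for some $t_1\in(0,T)$ the function $\omega(x)=u(t_1,x)=\big(\sigma^*+\int_0^{t_1}H(\tau,\cdot)d\tau\big)^*(x)$ is of class $C^1(\mathbb{R}^n)$. Then: (1) every characteristic curve $\mathcal C:\ x=x(t,z)=z+\int_{t_1}^tH_p(\tau,D\omega(z))\,d\tau$, $t\in[t_1,T]$, of problem $(H,\omega)$ can be extended backward to a characteristic curve of problem $(H,\sigma)$ on $[0,T]$ starting at $(0,y)$, where $y=z-\int_0^{t_1}H_p(\tau,D\omega(z))\,d\tau$; that is, the curve $x(t)=z+\int_{t_1}^tH_p(\tau,D\omega(z))d\tau$, $t\in[0,T]$, is the characteristic curve of $(H,\sigma)$ emanating from $y$. (2) Conversely, if $\mathcal C':\ x=x(t,y)=y+\int_0^tH_p(\tau,D\sigma(y))\,d\tau$, $t\in[0,T]$, is a characteristic curve of problem $(H,\sigma)$ which is of type (I) at the point $(t_1,x_1)$, $x_1=x(t_1,y)$, then the restriction of $\mathcal C'$ to $[t_1,T]$ is a characteristic curve of problem $(H,\omega)$ on $[t_1,T]\times\mathbb{R}^n$, namely it equals $x=x_1+\int_{t_1}^tH_p(\tau,D\omega(x_1))d\tau$, $t\in[t_1,T]$.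
   Context: $f^*(y)=\sup_q\{\langle y,q\rangle-f(q)\}$ denotes the Fenchel conjugate; $D\sigma$, $D\omega$ denote gradients and $H_p$ the gradient of $H$ in $p$. Problem $(H,\sigma)$ is the Cauchy problem $u_t+H(t,D_xu)=0$ on $(0,T)\times\mathbb{R}^n$, $u(0,x)=\sigma(x)$; its characteristic curve emanating from $y\in\mathbb{R}^n$ is $x(t,y)=y+\int_0^tH_p(\tau,D\sigma(y))d\tau$, $t\in[0,T]$ (the $x$-component of the solution of $\dot x=H_p$, $\dot v=\langle H_p,p\rangle-H$, $\dot p=0$, $x(0)=y$, $v(0)=\sigma(y)$, $p(0)=D\sigma(y)$). Problem $(H,\omega)$ is the Cauchy problem $u_t+H(t,D_xu)=0$ on $(t_1,T)\times\mathbb{R}^n$, $u(t_1,x)=\omega(x)$; its characteristic curve emanating from $z$ is $x(t,z)=z+\int_{t_1}^tH_p(\tau,D\omega(z))d\tau$, $t\in[t_1,T]$. For $(t,x)$, $\ell(t,x)$ is the set of maximizers $p\in\mathbb{R}^n$ of $q\mapsto\langle x,q\rangle-\sigma^*(q)-\int_0^tH(\tau,q)d\tau$. A characteristic curve of $(H,\sigma)$ emanating from $y$ and passing through $(t_0,x_0)$ is of type (I) at $(t_0,x_0)$ if $D\sigma(y)\in\ell(t_0,x_0)$. *)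

From HB Require Import structures.
From mathcomp Require Import all_boot all_order all_algebra.
From mathcomp Require Import all_classical all_reals all_analysis.
Set Implicit Arguments. Unset Strict Implicit. Unset Printing Implicit Defensive.
Import Order.TTheory GRing.Theory Num.Theory.
Import numFieldNormedType.Exports.
Local Open Scope classical_set_scope.
Local Open Scope ring_scope.

Section Defs.
Variables (R : realType) (n : nat).
Notation V := 'rV[R]_n.

Definition dotv (u v : V) : R := \sum_(i < n) u 0 i * v 0 i.

Definition oint (a b : R) (f : R -> R) : R :=
  if a <= b then Rintegral lebesgue_measure `[a, b] f
  else - Rintegral lebesgue_measure `[b, a] f.

Definition voint (a b : R) (F : R -> V) : V :=
  \row_(i < n) oint a b (fun t => F t 0 i).

Definition fconj (f : V -> \bar R) (y : V) : \bar R :=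
  ereal_sup [set ((dotv y q)%:E - f q)%E | q in [set: V]].

Definition is_gradient (f : V -> R) (x g : V) : Prop :=
  differentiable f x /\ forall h : V, 'd f x h = dotv g h.

Definition C1_grad (f : V -> R) (Df : V -> V) : Prop :=
  (forall x, is_gradient f x (Df x)) /\ continuous Df.

Definition convex_fun (f : V -> R) : Prop :=
  forall (x y : V) (l : R), 0 <= l <= 1 ->
    f (l *: x + (1 - l) *: y) <= l * f x + (1 - l) * f y.

Definition lipschitz_fun (f : V -> R) : Prop :=
  exists L : R, forall x y : V, `|f x - f y| <= L * `|x - y|.

Definition strip (T : R) : set (R * V) := [set tp | 0 <= tp.1 <= T].

(* H is C^1 on [0,T] x R^n (one-sided in t at t = 0, T), with partial
   gradient in p equal to Hp: there is a partial t-derivative Ht such that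
   Ht and Hp are continuous on the strip and (Ht, Hp) is the joint
   (Frechet) derivative of H at every point of the strip, within the strip. *)
Definition C1_strip (T : R) (H : R -> V -> R) (Hp : R -> V -> V) : Prop :=
  exists Ht : R -> V -> R,
    {within strip T, continuous (fun tp : R * V => Ht tp.1 tp.2)} /\
    {within strip T, continuous (fun tp : R * V => Hp tp.1 tp.2)} /\
    forall t p, 0 <= t <= T -> forall eps : R, 0 < eps ->
      exists2 delta : R, 0 < delta &
        forall (s : R) (h : V), 0 <= t + s <= T -> `|s| < delta -> `|h| < delta ->
          `|H (t + s) (p + h) - H t p - s * Ht t p - dotv (Hp t p) h|
            <= eps * (`|s| + `|h|).

Definition hopf (sigma : V -> R) (H : R -> V -> R) (t : R) : V -> \bar R :=
  fconj (fun q => (fconj (fun p => (sigma p)%:E) q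
                   + (oint 0 t (fun tau => H tau q))%:E)%E).

Definition ell (sigma : V -> R) (H : R -> V -> R) (t : R) (x : V) : set V :=
  let F := fun q => ((dotv x q)%:E - fconj (fun p => (sigma p)%:E) q
                      - (oint 0 t (fun tau => H tau q))%:E)%E in
  [set p | forall q, (F q <= F p)%E].

Definition char_sigma (Hp : R -> V -> V) (Dsigma : V -> V) (y : V) (t : R) : V :=
  y + voint 0 t (fun tau => Hp tau (Dsigma y)).

Definition char_omega (Hp : R -> V -> V) (Domega : V -> V) (t1 : R) (z : V) (t : R) : V :=
  z + voint t1 t (fun tau => Hp tau (Domega z)).

End Defs.

(* Write G(q) = \int_0^{t1} H(tau, q) dtau and S = sigma^*, so that
   omega(x) = sup_q <x,q> - S(q) - G(q).

   (2) If Dsigma(y) is a maximiser at x1, it is a subgradient of omega at x1,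
   hence equals Domega(x1); both curves then move with velocity
   H_p(tau, Dsigma(y)) after time t1.

   (1) Since sigma is Lipschitz, S is finite only on a bounded set, so a
   maximising sequence for omega(z) has a cluster point p.  Passing to the
   limit, p is a subgradient of omega at z, so p = Domega(z), and
   S(p) = <z,p> - G(p) - omega(z).  As S(q) >= <z,q> - G(q) - omega(z) for all
   q with equality at p, convexity of S and differentiability of G give that
   y = z - \int_0^{t1} H_p(tau, p) dtau is a subgradient of S at p; by Fenchel
   duality for the convex C^1 function sigma this means p = Dsigma(y).  Hence
   the characteristic of (H, sigma) from y reaches z at time t1 and then moves
   with the same velocity H_p(tau, p) as the one of (H, omega) from z. *)

From HB Require Import structures.
From mathcomp Require Import all_boot all_order all_algebra.
From mathcomp Require Import all_classical all_reals all_analysis.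
From mathcomp Require Import ring lra.
Import Order.TTheory GRing.Theory Num.Theory.
Import numFieldNormedType.Exports.
Local Open Scope classical_set_scope.
Local Open Scope ring_scope.
Set Implicit Arguments. Unset Strict Implicit. Unset Printing Implicit Defensive.

Section InnerProduct.
Variables (R : realType) (n : nat).
Notation V := 'rV[R]_n.

Lemma dotvC (u v : V) : dotv u v = dotv v u.
Proof. by apply: eq_bigr => i _; rewrite mulrC. Qed.

Lemma dotvDl (u v w : V) : dotv (u + v) w = dotv u w + dotv v w.
Proof. by rewrite /dotv -big_split; apply: eq_bigr => i _; rewrite mxE mulrDl. Qed.

Lemma dotvZl (a : R) (u w : V) : dotv (a *: u) w = a * dotv u w.
Proof. by rewrite /dotv mulr_sumr; apply: eq_bigr => i _; rewrite mxE mulrA. Qed.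

Lemma dotvNl (u w : V) : dotv (- u) w = - dotv u w.
Proof. by rewrite -scaleN1r dotvZl mulN1r. Qed.

Lemma dotvBl (u v w : V) : dotv (u - v) w = dotv u w - dotv v w.
Proof. by rewrite dotvDl dotvNl. Qed.

Lemma dotvDr (u v w : V) : dotv w (u + v) = dotv w u + dotv w v.
Proof. by rewrite dotvC dotvDl !(dotvC w). Qed.

Lemma dotvZr (a : R) (u w : V) : dotv w (a *: u) = a * dotv w u.
Proof. by rewrite dotvC dotvZl dotvC. Qed.

Lemma dotvNr (u w : V) : dotv w (- u) = - dotv w u.
Proof. by rewrite !(dotvC w) dotvNl. Qed.

Lemma dotvBr (u v w : V) : dotv w (u - v) = dotv w u - dotv w v.
Proof. by rewrite dotvDr dotvNr. Qed.

Lemma dotv_delta (v : V) i : dotv v (delta_mx 0 i) = v 0 i.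
Proof.
rewrite /dotv (bigD1 i) //= big1 ?addr0 => [|j /negbTE ji]; rewrite mxE eqxx.
  by rewrite eqxx mulr1.
by rewrite ji mulr0.
Qed.

Lemma dotv_ext (a b : V) : (forall v, dotv a v = dotv b v) -> a = b.
Proof. by move=> eq_ab; apply/rowP => i; rewrite -!dotv_delta eq_ab. Qed.

Lemma row_entry_le_norm (v : V) i : `|v 0 i| <= `|v|.
Proof.
rewrite [leRHS]/Num.norm /= mx_normrE.
by apply/bigmax_geP; right => /=; exists (ord0, i).
Qed.

Lemma row_norm_le (v : V) c : 0 <= c -> (forall i, `|v 0 i| <= c) -> `|v| <= c.
Proof.
move=> c0 le_vc; rewrite [leLHS]/Num.norm /= mx_normrE.
by apply/bigmax_leP; split => // -[i j] _ /=; rewrite (ord1 i).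
Qed.

Lemma norm_delta_row i : `|delta_mx 0 i : V| <= 1.
Proof.
apply: row_norm_le => // j; rewrite mxE eqxx /=.
by case: (j == i); rewrite ?normr1 ?normr0.
Qed.

Lemma norm_dotv_le (a b : V) : `|dotv a b| <= n%:R * (`|a| * `|b|).
Proof.
apply: le_trans (ler_norm_sum _ _ _) _.
rewrite mulr_natl -[X in _ *+ X]card_ord -sumr_const.
by apply: ler_sum => i _; rewrite normrM ler_pM ?row_entry_le_norm.
Qed.

Lemma dotv_near (a p : V) e : 0 < e -> exists2 r, 0 < r &
  forall q, `|p - q| < r -> `|dotv a q - dotv a p| <= e.
Proof.
move=> e0; have c0 : 0 < n%:R * `|a| + 1 by rewrite ltr_wpDl // mulr_ge0.
exists (e / (n%:R * `|a| + 1)) => [|q pq]; first by rewrite divr_gt0.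
have qp : `|q - p| <= e / (n%:R * `|a| + 1) by rewrite distrC ltW.
rewrite -dotvBr; apply: le_trans (norm_dotv_le _ _) _.
apply: le_trans (ler_wpM2l (ler0n _ n) (ler_wpM2l (normr_ge0 a) qp)) _.
have -> : n%:R * (`|a| * (e / (n%:R * `|a| + 1))) =
          e * (n%:R * `|a| / (n%:R * `|a| + 1)) by ring.
by apply: ler_piMr; [exact: ltW | rewrite ler_pdivrMr // mul1r lerDl].
Qed.

End InnerProduct.

Section Gradient.
Variables (R : realType) (n : nat).
Notation V := 'rV[R]_n.
Implicit Types (f : V -> R) (x g v : V).

Lemma gradient_quotient_approx f x g v e : is_gradient f x g -> 0 < e ->
  exists h, 0 < h <= 1 /\ `|dotv g v - h^-1 * (f (h *: v + x) - f x)| < e.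
Proof.
move=> [dfx dfE] e0.
have : derivable f x v := diff_derivable dfx.
rewrite /derivable => /cvg_ex [l fl].
have -> : dotv g v = l by rewrite -dfE -deriveE // /derive (cvg_lim _ fl).
move/cvgrPdist_lt: fl => /(_ e e0) /nbhs_normP [d /= d0 near_l].
have d20 : 0 < Num.min (d / 2) 1 by rewrite lt_min ltr01 andbT divr_gt0.
exists (Num.min (d / 2) 1); split; first by rewrite d20 ge_min lexx orbT.
apply: near_l; last by rewrite gt_eqF.
rewrite /= sub0r normrN gtr0_norm // gt_min; apply/orP; left; lra.
Qed.

Lemma gradient_le f x g v c : is_gradient f x g ->
  (forall h, 0 < h <= 1 -> h^-1 * (f (h *: v + x) - f x) <= c) -> dotv g v <= c.
Proof.
move=> gfx le_c; apply/ler_addgt0Pr => e e0.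
have [h [h01 approx]] := gradient_quotient_approx v gfx e0.
have := le_c h h01; move: approx; rewrite ltr_norml; lra.
Qed.

Lemma gradient_ge f x g v c : is_gradient f x g ->
  (forall h, 0 < h <= 1 -> c <= h^-1 * (f (h *: v + x) - f x)) -> c <= dotv g v.
Proof.
move=> gfx ge_c; apply/ler_addgt0Pr => e e0.
have [h [h01 approx]] := gradient_quotient_approx v gfx e0.
have := ge_c h h01; move: approx; rewrite ltr_norml; lra.
Qed.

Lemma subgradient_gradient f x g p : is_gradient f x g ->
  (forall w, f x + dotv p (w - x) <= f w) -> p = g.
Proof.
move=> gfx subp.
have le_pg v : dotv p v <= dotv g v.
  apply: (gradient_ge (v := v) gfx) => h /andP[h0 _].
  rewrite ler_pdivlMl // -dotvZr.
  by have := subp (h *: v + x); rewrite addrK; lra.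
by apply: dotv_ext => v; apply/eqP; rewrite eq_le le_pg -lerN2 -!dotvNr le_pg.
Qed.

Lemma convex_gradient_ineq f x g : convex_fun f -> is_gradient f x g ->
  forall w, f x + dotv g (w - x) <= f w.
Proof.
move=> cvx gfx w.
suff : dotv g (w - x) <= f w - f x by lra.
apply: (gradient_le (v := w - x) gfx) => h /andP[h0 h1].
have -> : h *: (w - x) + x = h *: w + (1 - h) *: x.
  by rewrite scalerBr scalerBl scale1r addrA addrAC.
have := cvx w x h; rewrite (ltW h0) h1 => /(_ isT) le_fh.
by rewrite ler_pdivrMl //; lra.
Qed.

End Gradient.

Section OrientedIntegral.
Variable R : realType.
Notation mu := (@lebesgue_measure R).
Implicit Types (f : R -> R) (a b c T : R).

Lemma continuous_integrable_itv T a b f : {within `[0, T], continuous f} ->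
  0 <= a -> b <= T -> mu.-integrable `[a, b] (EFin \o f).
Proof.
move=> cf a0 bT; apply: continuous_compact_integrable; first exact: segment_compact.
apply: continuous_subspaceW cf => x /=; rewrite !in_itv /= => /andP[ax xb].
by rewrite (le_trans a0 ax) (le_trans xb bT).
Qed.

Lemma oint0_Rintegral b f : 0 <= b -> oint 0 b f = Rintegral mu `[0, b] f.
Proof. by rewrite /oint => ->. Qed.

Lemma Rintegral_itv_sub T a b f : {within `[0, T], continuous f} ->
  0 <= a -> a <= b -> b <= T ->
  Rintegral mu `[a, b] f = oint 0 b f - oint 0 a f.
Proof.
move=> cf a0 ab bT; rewrite !oint0_Rintegral ?(le_trans a0 ab) //.
have f_int := continuous_integrable_itv cf (lexx 0) bT.
rewrite (@Rintegral_itvB _ f (BLeft 0) (BRight b) a) ?bnd_simp //.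
rewrite Rintegral_itv_obnd_cbnd //; apply: integrableS f_int => //.
by apply: subset_itvr; rewrite bnd_simp.
Qed.

Lemma oint_sub T a b f : {within `[0, T], continuous f} ->
  0 <= a <= T -> 0 <= b <= T -> oint a b f = oint 0 b f - oint 0 a f.
Proof.
move=> cf /andP[a0 aT] /andP[b0 bT]; rewrite {1}/oint; case: ifPn => ab.
  exact: Rintegral_itv_sub cf a0 ab bT.
by rewrite -ltNge in ab; rewrite (Rintegral_itv_sub cf b0 (ltW ab) aT) opprB.
Qed.

Lemma Rintegral_cst_itv0 b c : 0 < b -> Rintegral mu `[0, b] (fun _ => c) = c * b.
Proof.
by move=> b0; rewrite Rintegral_cst //= lebesgue_measure_itv /= lte_fin b0 /= subr0.
Qed.

Lemma continuous_within_sum (A : set R) (I : Type) (r : seq I) (F : I -> R -> R) :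
  (forall i, {within A, continuous (F i)}) ->
  {within A, continuous (fun x => \sum_(i <- r) F i x)}.
Proof.
move=> cF; elim: r => [|i r IHr].
  by under eq_fun do rewrite big_nil; move=> x; apply: cst_continuous.
by under eq_fun do rewrite big_cons; move=> x; apply: continuousD (cF i x) (IHr x).
Qed.

Section OnSegment.
Variables (T b : R).
Hypothesis b0T : 0 < b <= T.

Lemma norm_Rintegral_le f c : {within `[0, T], continuous f} ->
  (forall t, 0 <= t <= b -> `|f t| <= c) -> `|Rintegral mu `[0, b] f| <= c * b.
Proof.
move=> cf le_fc; case/andP: b0T => b0 bT.
have cst_int c' : mu.-integrable `[0, b] (EFin \o (fun _ : R => c')).
  by apply: (continuous_integrable_itv (T := T)) => // x; apply: cst_continuous.
have f_int := continuous_integrable_itv cf (lexx 0) bT.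
rewrite ler_norml -mulNr -!Rintegral_cst_itv0 //.
by apply/andP; split; apply: le_Rintegral => // t /=; rewrite in_itv /= => /le_fc;
  rewrite ler_norml => /andP[].
Qed.

Lemma Rintegral_sum (I : eqType) (r : seq I) (F : I -> R -> R) :
  (forall i, {within `[0, T], continuous (F i)}) ->
  Rintegral mu `[0, b] (fun x => \sum_(i <- r) F i x) =
  \sum_(i <- r) Rintegral mu `[0, b] (F i).
Proof.
move=> cF; case/andP: b0T => b0 bT; elim: r => [|i r IHr].
  rewrite big_nil -[RHS](mul0r b) -(Rintegral_cst_itv0 0 b0).
  by congr Rintegral; apply/funext => x; rewrite big_nil.
rewrite big_cons -IHr -RintegralD //.
- by congr Rintegral; apply/funext => x; rewrite big_cons.
- exact: continuous_integrable_itv (cF i) (lexx 0) bT.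
- by apply: (continuous_integrable_itv (T := T)) => //; apply: continuous_within_sum.
Qed.

End OnSegment.
End OrientedIntegral.

Section VectorIntegral.
Variables (R : realType) (n : nat).
Notation V := 'rV[R]_n.
Variables (T : R) (F : R -> V).
Hypothesis cF : forall i, {within `[0, T], continuous (fun t => F t 0 i)}.

Lemma voint_chasles a b c : 0 <= a <= T -> 0 <= b <= T -> 0 <= c <= T ->
  voint a c F = voint a b F + voint b c F.
Proof.
move=> a0T b0T c0T; apply/rowP => i; rewrite !mxE.
rewrite (oint_sub (@cF i) a0T c0T) (oint_sub (@cF i) a0T b0T) (oint_sub (@cF i) b0T c0T).
by rewrite [RHS]addrC addrA subrK.
Qed.

Lemma dotv_voint b d : 0 < b <= T ->
  dotv (voint 0 b F) d = Rintegral lebesgue_measure `[0, b] (fun t => dotv (F t) d).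
Proof.
move=> b0T; case/andP: (b0T) => b0 bT.
rewrite /dotv (Rintegral_sum b0T); last first.
  by move=> i x; apply: continuousM; [exact: cF | exact: cst_continuous].
apply: eq_bigr => i _; rewrite mxE oint0_Rintegral ?ltW // RintegralZr //.
exact: continuous_integrable_itv (@cF i) (lexx 0) bT.
Qed.

End VectorIntegral.

Section StripContinuity.
Variables (R : realType) (n : nat) (T : R).
Notation V := 'rV[R]_n.

Definition strip_continuous (W : normedModType R) (K : R -> V -> W) : Prop :=
  forall t0 p0, 0 <= t0 <= T -> forall e, 0 < e -> exists2 d, 0 < d &
    forall t p, 0 <= t <= T -> `|t0 - t| < d -> `|p0 - p| < d -> `|K t0 p0 - K t p| < e.

Variable W : normedModType R.
Implicit Type K : R -> V -> W.

Lemma within_strip_continuous K :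
  {within strip T, continuous (fun tp : R * V => K tp.1 tp.2)} -> strip_continuous K.
Proof.
move=> cK t0 p0 t0T e e0.
move/subspace_continuousP: cK => /(_ (t0, p0) t0T) /cvgrPdist_lt /(_ e e0).
rewrite /within /= => /nbhs_ballP [d /= d0 near_K].
exists d => // t p tT tt0 pp0; apply: (near_K (t, p)) => //.
by split; rewrite -ball_normE.
Qed.

Lemma strip_continuous_time K p : strip_continuous K ->
  {within `[0, T], continuous (K^~ p)}.
Proof.
move=> cK; apply/subspace_continuousP => t0; rewrite /= in_itv /= => t0T.
apply/cvgrPdist_lt => e e0; have [d d0 near_K] := cK t0 p t0T e e0.
apply/nbhs_normP; exists d => //= t tt0; rewrite in_itv /= => tT.
by apply: near_K; rewrite // subrr normr0.
Qed.

(* Uniformity in t comes from the compactness of [0, T]. *)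
Lemma strip_continuous_unif K p0 : strip_continuous K ->
  forall e, 0 < e -> exists2 d, 0 < d &
    forall t p, 0 <= t <= T -> `|p0 - p| < d -> `|K t p0 - K t p| < e.
Proof.
move=> cK e e0.
pose P (r t : R) := forall p, `|p0 - p| < `|r| -> `|K t p0 - K t p| < e.
have : \forall r \near (0 : R), `[0, T] `<=` P r.
  have : compact `[0, T] by exact: segment_compact.
  move/compact_near_coveringP/near_covering_withinP => cover.
  apply: (cover R (nbhs (0 : R)) P) => t0; rewrite /= in_itv /= => t0T.
  have [d d0 near_K] := cK t0 p0 t0T (e / 2) (divr_gt0 e0 (ltr0Sn _ 1)).
  exists ([set t | `|t0 - t| < d], [set r | `|0 - r| < d]).
    by split; apply/nbhs_ballP; exists d => //= x; rewrite -ball_normE.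
  move=> [t r] /= [tt0 rd]; rewrite in_itv /= => tT p pp0.
  rewrite sub0r normrN in rd.
  have : `|K t0 p0 - K t p0| < e / 2 by apply: near_K; rewrite // subrr normr0.
  rewrite distrC => Kp0; have := ler_distD (K t0 p0) (K t p0) (K t p).
  by have := near_K t p tT tt0 (lt_trans pp0 rd); lra.
move=> /nbhs_ballP [d /= d0 near_P]; exists (d / 2); first by rewrite divr_gt0.
move=> t p tT pp0; apply: (near_P (d / 2)); rewrite /= ?in_itv //=.
  by rewrite -ball_normE /= sub0r normrN gtr0_norm ?divr_gt0 //; lra.
by rewrite gtr0_norm ?divr_gt0.
Qed.

End StripContinuity.

Section C1Strip.
Variables (R : realType) (n : nat).
Notation V := 'rV[R]_n.
Variables (T : R) (H : R -> V -> R) (Hp : R -> V -> V).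
Hypothesis HC1 : C1_strip T H Hp.

Lemma C1_strip_H_continuous : strip_continuous T H.
Proof.
move=> t0 p0 t0T e e0; case: HC1 => Ht [_ [_ DH]].
have [dl dl0 DH1] := DH t0 p0 t0T 1 ltr01.
pose C := `|Ht t0 p0| + n%:R * `|Hp t0 p0| + 2.
have C0 : 0 < C by rewrite /C ltr_wpDl // addr_ge0.
exists (Num.min dl (e / C)); first by rewrite lt_min dl0 divr_gt0.
move=> t p tT; rewrite !lt_min => /andP[tdl teC] /andP[pdl peC].
rewrite distrC in tdl teC; rewrite distrC in pdl peC.
have := DH1 (t - t0) (p - p0); rewrite ![t0 + _]addrC ![p0 + _]addrC !subrK mul1r.
move=> /(_ tT tdl pdl) DHtp.
have lin_p := norm_dotv_le (Hp t0 p0) (p - p0).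
have lin_t : `|(t - t0) * Ht t0 p0| <= e / C * `|Ht t0 p0|.
  by rewrite normrM ler_wpM2r // ltW.
have lin_p' : n%:R * (`|Hp t0 p0| * `|p - p0|) <= n%:R * (`|Hp t0 p0| * (e / C)).
  by rewrite ler_wpM2l // ler_wpM2l // ltW.
have eC : e / C * C = e by rewrite divfK // gt_eqF.
have tri (a b : R) : `|a| <= `|a - b| + `|b| by rewrite -{1}(subrK b a) ler_normD.
have := tri (H t p - H t0 p0 - (t - t0) * Ht t0 p0) (dotv (Hp t0 p0) (p - p0)).
have := tri (H t p - H t0 p0) ((t - t0) * Ht t0 p0).
rewrite distrC; move: eC; rewrite /C !mulrDr; lra.
Qed.

Lemma C1_strip_Hp_continuous : strip_continuous T Hp.
Proof. by case: HC1 => Ht [_ [cHp _]]; apply: within_strip_continuous. Qed.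

Lemma C1_strip_Hp_entry_continuous p i :
  {within `[0, T], continuous (fun t => Hp t p 0 i)}.
Proof.
apply: (strip_continuous_time (K := fun t q => Hp t q 0 i)) => t0 p0 t0T e e0.
have [d d0 near_Hp] := C1_strip_Hp_continuous p0 t0T e0.
exists d => // t q tT tt0 qp0; apply: le_lt_trans (near_Hp t q tT tt0 qp0).
by have := row_entry_le_norm (Hp t0 p0 - Hp t q) i; rewrite !mxE.
Qed.

Lemma C1_strip_Hp_dotv_continuous p d :
  {within `[0, T], continuous (fun t => dotv (Hp t p) d)}.
Proof.
apply: continuous_within_sum => i x; apply: continuousM; last exact: cst_continuous.
exact: C1_strip_Hp_entry_continuous.
Qed.

End C1Strip.

Lemma is_derive_eps (R : realType) (phi : R -> R) (r D : R) :
  (forall e, 0 < e -> exists2 d, 0 < d & forall u, `|u| < d ->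
     `|phi (r + u) - phi r - u * D| <= e * `|u|) -> is_derive r 1 phi D.
Proof.
move=> approx.
suff quot : (fun u : R => u^-1 *: ((phi \o shift r) (u *: 1) - phi r)) @ 0^' --> D.
  by split; [exact: cvgP quot | exact: cvg_lim quot].
apply/cvgrPdist_lt => e e0.
have [d d0 near_phi] := approx _ (divr_gt0 e0 (ltr0Sn _ 1)).
rewrite /dnbhs /within /=; apply/nbhs_normP; exists d => // u /=.
rewrite sub0r normrN => ud u0.
have u_gt0 : 0 < `|u| by rewrite normr_gt0.
have -> : D - u^-1 *: (phi (u *: 1 + r) - phi r) =
          - (u^-1 * (phi (r + u) - phi r - u * D)).
  rewrite /GRing.scale /= mulr1 (addrC u).
  by rewrite [in RHS]mulrBr [in RHS]mulrA mulVf // mul1r opprB.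
rewrite normrN normrM normrV ?unitfE // ltr_pdivrMl //.
by apply: le_lt_trans (near_phi u ud) _; rewrite mulrC ltr_pM2l //; lra.
Qed.

Section HopfIntegrand.
Variables (R : realType) (n : nat).
Notation V := 'rV[R]_n.
Variables (T : R) (H : R -> V -> R) (Hp : R -> V -> V).
Hypothesis HC1 : C1_strip T H Hp.

Lemma is_derive_H_segment tau (q d : V) (r : R) : 0 <= tau <= T ->
  is_derive r (1 : R) (fun r : R => H tau (q + r *: d)) (dotv (Hp tau (q + r *: d)) d).
Proof.
move=> tauT; apply: is_derive_eps => e e0.
case: HC1 => Ht [_ [_ DH]].
pose Q := q + r *: d.
have d1 : 0 < `|d| + 1 by apply: ltr_wpDl.
have [dl dl0 DHQ] := DH tau Q tauT (e / (`|d| + 1)) (divr_gt0 e0 d1).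
exists (dl / (`|d| + 1)); first by rewrite divr_gt0.
move=> u; rewrite ltr_pdivlMr // => ud.
have ud' : `|u *: d| < dl.
  by rewrite normrZ; apply: le_lt_trans ud; rewrite mulrDr mulr1 lerDl.
have := DHQ 0 (u *: d); rewrite addr0 normr0 mul0r subr0 add0r => /(_ tauT dl0 ud').
rewrite /Q scalerDl addrA dotvZr normrZ => /le_trans; apply.
have -> : e / (`|d| + 1) * (`|u| * `|d|) = e * `|u| * (`|d| / (`|d| + 1)) by ring.
apply: ler_piMr; first by rewrite mulr_ge0 // ltW.
by rewrite ler_pdivrMr // mul1r lerDl.
Qed.

Lemma H_segment_MVT tau p d s : 0 <= tau <= T -> 0 < s ->
  exists2 c, 0 < c < s & H tau (p + s *: d) - H tau p = s * dotv (Hp tau (p + c *: d)) d.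
Proof.
move=> tauT s0.
have DHs := fun r => is_derive_H_segment p d r tauT.
have cont : {within `[0, s], continuous (fun r : R => H tau (p + r *: d))}.
  by apply: derivable_within_continuous => x _; exact: ex_derive.
have [c c0s mvt] := MVT s0 (fun x _ => DHs x) cont.
exists c; first by move: c0s; rewrite in_itv.
by move: mvt; rewrite scale0r addr0 subr0 mulrC.
Qed.

Lemma H_directional_unif p d e : 0 < e -> exists2 dl, 0 < dl &
  forall tau s : R, 0 <= tau <= T -> 0 < s < dl ->
    `|H tau (p + s *: d) - H tau p - s * dotv (Hp tau p) d| <= e * s.
Proof.
move=> e0.
have nd1 : 0 < n%:R * `|d| + 1 by apply: ltr_wpDl => //; apply: mulr_ge0.
have [d1 d10 near_Hp] :=
  strip_continuous_unif p (C1_strip_Hp_continuous HC1) (divr_gt0 e0 nd1).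
have d_1 : 0 < `|d| + 1 by apply: ltr_wpDl.
exists (d1 / (`|d| + 1)); first by rewrite divr_gt0.
move=> tau s tauT /andP[s0 sd].
have [c /andP[c0 cs] ->] := H_segment_MVT p d tauT s0.
rewrite -mulrBr -dotvBl normrM gtr0_norm // mulrC ler_pM2r //.
apply: le_trans (norm_dotv_le _ _) _.
have pc : `|p - (p + c *: d)| < d1.
  rewrite opprD addNKr normrN normrZ gtr0_norm //.
  move: (lt_trans cs sd); rewrite ltr_pdivlMr // => /(le_lt_trans _); apply.
  by rewrite mulrDr mulr1 lerDl ltW.
have := near_Hp tau _ tauT pc; rewrite distrC => Hp_close.
have : n%:R * (`|Hp tau (p + c *: d) - Hp tau p| * `|d|) <=
       n%:R * (e / (n%:R * `|d| + 1) * `|d|) by rewrite ler_wpM2l // ler_wpM2r // ltW.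
move/le_trans; apply.
have -> : n%:R * (e / (n%:R * `|d| + 1) * `|d|) = e * (n%:R * `|d| / (n%:R * `|d| + 1)).
  by ring.
apply: ler_piMr; first exact: ltW.
by rewrite ler_pdivrMr // mul1r lerDl.
Qed.

End HopfIntegrand.

Section IntegratedHamiltonian.
Variables (R : realType) (n : nat).
Notation V := 'rV[R]_n.
Notation mu := (@lebesgue_measure R).
Variables (T t1 : R) (H : R -> V -> R) (Hp : R -> V -> V).
Hypotheses (HC1 : C1_strip T H Hp) (t1T : 0 < t1 <= T).
Local Notation G q := (oint 0 t1 (fun tau => H tau q)).

Let t10 : 0 <= t1. Proof. by case/andP: t1T => /ltW. Qed.
Let t1_le_T : t1 <= T. Proof. by case/andP: t1T. Qed.

Let H_time_continuous q : {within `[0, T], continuous (fun tau => H tau q)}.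
Proof. exact: strip_continuous_time (C1_strip_H_continuous HC1). Qed.

Let H_integrable q : mu.-integrable `[0, t1] (EFin \o (fun tau => H tau q)).
Proof.
by apply: (continuous_integrable_itv (T := T)) => //; exact: H_time_continuous.
Qed.

Lemma G_continuous p e : 0 < e -> exists2 dl, 0 < dl &
  forall q, `|p - q| < dl -> `|G p - G q| <= e.
Proof.
move=> e0; have t1_gt0 : 0 < t1 by case/andP: t1T.
have [dl dl0 near_H] :=
  strip_continuous_unif p (C1_strip_H_continuous HC1) (divr_gt0 e0 t1_gt0).
exists dl => // q pq.
rewrite !oint0_Rintegral // -RintegralB // -[e](divfK (lt0r_neq0 t1_gt0)).
apply: (norm_Rintegral_le t1T).
  by move=> x; apply: continuousB; apply: H_time_continuous.
by move=> t /andP[t0 tt1]; apply/ltW/near_H => //; rewrite t0 (le_trans tt1).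
Qed.

Lemma G_directional p d e : 0 < e -> exists2 dl, 0 < dl &
  forall s : R, 0 < s < dl ->
    `|G (p + s *: d) - G p - s * dotv (voint 0 t1 (fun tau => Hp tau p)) d| <= e * s.
Proof.
move=> e0; have t1_gt0 : 0 < t1 by case/andP: t1T.
have [dl dl0 near_H] := H_directional_unif HC1 p d (divr_gt0 e0 t1_gt0).
exists dl => // s sdl.
have cHpd := C1_strip_Hp_dotv_continuous (p := p) (d := d) HC1.
have cHpd_s : {within `[0, T], continuous (fun tau => s * dotv (Hp tau p) d)}.
  rewrite (_ : (fun tau => _) = fun tau => dotv (Hp tau p) (s *: d)).
    exact: (C1_strip_Hp_dotv_continuous (p := p) (d := s *: d) HC1).
  by apply/funext => tau; rewrite dotvZr.
have cHdiff : {within `[0, T], continuous (fun tau => H tau (p + s *: d) - H tau p)}.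
  by move=> x; apply: continuousB; apply: H_time_continuous.
rewrite (dotv_voint (fun i => C1_strip_Hp_entry_continuous (p := p) (i := i) HC1)) //.
rewrite !oint0_Rintegral // -RintegralZl //; last first.
  exact: continuous_integrable_itv cHpd _ _.
rewrite -!RintegralB //; first last.
- exact: continuous_integrable_itv cHpd_s (lexx 0) t1_le_T.
- exact: continuous_integrable_itv cHdiff (lexx 0) t1_le_T.
have -> : e * s = e / t1 * s * t1 by rewrite mulrAC divfK // lt0r_neq0.
apply: (norm_Rintegral_le t1T) => [x|t /andP[t0 tt1]].
  exact: continuousB (cHdiff x) (cHpd_s x).
by apply: near_H; rewrite // t0 (le_trans tt1).
Qed.

End IntegratedHamiltonian.

Section Conjugate.
Variables (R : realType) (n : nat).
Notation V := 'rV[R]_n.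
Variable sigma : V -> R.
Local Notation S := (fconj (fun p => (sigma p)%:E)).

Lemma fconj_ge q w : ((dotv q w - sigma w)%:E <= S q)%E.
Proof. by apply: ereal_sup_ubound; exists w => //; rewrite EFinB. Qed.

Lemma fconj_le q c : (forall w, dotv q w - sigma w <= c) -> (S q <= c%:E)%E.
Proof. by move=> le_c; apply: ge_ereal_sup => _ [w _ <-]; rewrite -EFinB lee_fin. Qed.

Lemma fconj_fin q : (S q < +oo)%E -> exists s, S q = s%:E.
Proof.
case Sq : (S q) => [s| |] // _; first by exists s.
by have := fconj_ge q 0; rewrite Sq.
Qed.

Lemma fconj_gradient y g : convex_fun sigma -> is_gradient sigma y g ->
  S g = (dotv g y - sigma y)%:E.
Proof.
move=> cvx gy; apply/le_anti/andP; split; last exact: fconj_ge.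
apply: fconj_le => w; have := convex_gradient_ineq cvx gy w.
by rewrite dotvBr; lra.
Qed.

(* Testing the conjugate on w = k sg(q_i) e_i, k -> oo, shows that q_i is
   bounded by the Lipschitz constant wherever the conjugate is finite. *)
Lemma fconj_dom_bounded : lipschitz_fun sigma -> exists L : R,
  forall q, (S q < +oo)%E -> forall i, `|q 0 i| <= L.
Proof.
move=> [L lipL]; exists `|L| => q /fconj_fin [s Sq] i.
rewrite leNgt; apply/negP => L_lt_q.
pose a := `|q 0 i| - `|L|.
have a0 : 0 < a by rewrite subr_gt0.
pose k := (`|s + sigma 0| + 1) / a.
have k0 : 0 < k by rewrite divr_gt0 // ltr_wpDl.
have ka : k * a = `|s + sigma 0| + 1 by rewrite divfK // gt_eqF.
pose w : V := k *: (Num.sg (q 0 i) *: delta_mx 0 i).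
have qw : dotv q w = k * `|q 0 i| by rewrite !dotvZr dotv_delta -normrEsg.
have w_le_k : `|w| <= k.
  rewrite normrZ gtr0_norm //; apply: ler_piMr; first exact: ltW.
  rewrite normrZ normr_sg; have := norm_delta_row R i.
  by case: (q 0 i != 0); rewrite ?mul1r ?mul0r.
have := fconj_ge q w; rewrite Sq lee_fin qw => sq_ge.
have := lipL w 0; rewrite subr0 ler_norml => /andP[_ lip_w].
have Lw_le : L * `|w| <= `|L| * k.
  exact: le_trans (ler_wpM2r (normr_ge0 w) (ler_norm L))
                  (ler_wpM2l (normr_ge0 L) w_le_k).
have := ler_norm (s + sigma 0).
by move: ka; rewrite /a mulrBr; lra.
Qed.

Variables (H : R -> V -> R) (t1 : R).
Local Notation G q := (oint 0 t1 (fun tau => H tau q)).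

Lemma hopfE x : hopf sigma H t1 x =
  ereal_sup [set ((dotv x q)%:E - S q - (G q)%:E)%E | q in [set: V]].
Proof.
rewrite /hopf /fconj; congr ereal_sup; congr image; apply/funext => q.
by rewrite (addeC (S q)) oppeD // addeA addeAC.
Qed.

Variable omega : V -> R.
Hypothesis hopf_omega : forall x, hopf sigma H t1 x = (omega x)%:E.

Lemma hopf_objective_le x q : ((dotv x q)%:E - S q - (G q)%:E <= (omega x)%:E)%E.
Proof. by rewrite -hopf_omega hopfE; apply: ereal_sup_ubound; exists q. Qed.

Lemma fconj_ge_hopf x q : ((dotv x q - G q - omega x)%:E <= S q)%E.
Proof.
have := hopf_objective_le x q; case Sq : (S q) => [s| |].
- by rewrite -!EFinB !lee_fin; lra.
- by rewrite leey.
- by have := fconj_ge q 0; rewrite Sq.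
Qed.

Lemma ell_subgradient x p : ell sigma H t1 x p ->
  forall w, omega x + dotv p (w - x) <= omega w.
Proof.
move=> ell_p w.
have : (omega x)%:E = ((dotv x p)%:E - S p - (G p)%:E)%E.
  rewrite -hopf_omega hopfE; apply/le_anti/andP; split.
    by apply: ge_ereal_sup => _ [q _ <-]; exact: ell_p.
  by apply: ereal_sup_ubound; exists p.
case Sp : (S p) => [sp| |] //= [omega_x].
have := hopf_objective_le w p; rewrite Sp -!EFinB lee_fin.
by rewrite dotvBr !(dotvC p) omega_x; lra.
Qed.

End Conjugate.

Lemma bounded_approx_cluster (R : realType) (n : nat) (F : 'rV[R]_n -> \bar R)
    (M L : R) :
  (forall e, 0 < e -> exists q, ((M - e)%:E < F q)%E) ->
  (forall q, ((M - 1)%:E < F q)%E -> forall i, `|q 0 i| <= L) ->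
  exists p, forall e r, 0 < e -> 0 < r ->
    exists q, `|p - q| < r /\ ((M - e)%:E < F q)%E.
Proof.
move=> approx bounded.
pose B := [set v : 'rV[R]_n | forall i, `[- L, L]%classic (v ord0 i)].
have cB : compact B.
  by apply: (@rV_compact R n (fun=> `[- L, L]%classic)) => i; apply: segment_compact.
pose Fl := filter_from [set e : R | 0 < e] (fun e => [set q | ((M - e)%:E < F q)%E]).
have Fl_proper : ProperFilter Fl.
  apply: filter_from_proper; last by move=> e /approx [q]; exists q.
  apply: filter_from_filter; first by exists 1; exact: ltr01.
  move=> e e' e0 e'0; exists (Num.min e e'); first by rewrite /= lt_min e0 e'0.
  by move=> q /= Fq; split => /=; apply: le_lt_trans Fq;
    rewrite lee_fin lerD2l lerN2 ge_min lexx ?orbT.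
have FlB : Fl B.
  exists 1; first exact: ltr01.
  by move=> q /= Fq i; rewrite /= in_itv /= -ler_norml; exact: bounded Fq i.
have [p [_ p_cluster]] := cB Fl Fl_proper FlB.
exists p => e r e0 r0.
have Fl_e : Fl [set q | ((M - e)%:E < F q)%E] by exists e.
have [q [Fq pq]] := p_cluster _ _ Fl_e (nbhsx_ballx p r r0).
by exists q; split => //; move: pq; rewrite -ball_normE.
Qed.

Section HopfClusterPoint.
Variables (R : realType) (n : nat).
Notation V := 'rV[R]_n.
Variables (T t1 : R) (H : R -> V -> R) (Hp : R -> V -> V)
  (sigma : V -> R) (Dsigma : V -> V) (omega : V -> R) (Domega : V -> V).
Hypotheses (HC1 : C1_strip T H Hp) (t1T : 0 < t1 <= T)
  (sigma_C1 : C1_grad sigma Dsigma) (sigma_convex : convex_fun sigma)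
  (sigma_lipschitz : lipschitz_fun sigma)
  (hopf_omega : forall x, hopf sigma H t1 x = (omega x)%:E)
  (omega_C1 : C1_grad omega Domega).
Local Notation S := (fconj (fun p => (sigma p)%:E)).
Local Notation G q := (oint 0 t1 (fun tau => H tau q)).
Variable z : V.
Local Notation Fz q := ((dotv z q)%:E - S q - (G q)%:E)%E.

Lemma hopf_objective_gt q c : (c%:E < Fz q)%E ->
  exists s, S q = s%:E /\ c < dotv z q - s - G q.
Proof.
case Sq : (S q) => [s| |] //; last by have := fconj_ge sigma q 0; rewrite Sq.
by rewrite -!EFinB lte_fin => ?; exists s.
Qed.

Lemma hopf_cluster_point : exists p, forall e r, 0 < e -> 0 < r ->
  exists q, `|p - q| < r /\ ((omega z - e)%:E < Fz q)%E.
Proof.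
have [L bounded] := fconj_dom_bounded sigma_lipschitz.
apply: (bounded_approx_cluster (L := L)) => [e e0|q /hopf_objective_gt [s [Sq _]]].
  have : ((omega z - e)%:E < ereal_sup [set Fz q | q in [set: V]])%E.
    by rewrite -hopfE hopf_omega lte_fin; lra.
  by move/ereal_sup_gt => [_ [q _ <-] Fq]; exists q.
by apply: bounded; rewrite Sq ltry.
Qed.

Variable p : V.
Hypothesis p_cluster : forall e r, 0 < e -> 0 < r ->
  exists q, `|p - q| < r /\ ((omega z - e)%:E < Fz q)%E.

Lemma cluster_Domega : p = Domega z.
Proof.
apply: (subgradient_gradient (omega_C1.1 z)) => w; apply/ler_addgt0Pr => e e0.
have e20 : 0 < e / 2 by rewrite divr_gt0.
have [r r0 near_p] := dotv_near (w - z) p e20.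
have [q [pq Fq]] := p_cluster e20 r0.
have [s [Sq lt_s]] := hopf_objective_gt Fq.
have := hopf_objective_le hopf_omega w q; rewrite Sq -!EFinB lee_fin.
have := near_p q pq; rewrite ler_norml (dotvC p) !dotvBl => /andP[+ _]; lra.
Qed.

Lemma cluster_fconj : S p = (dotv z p - G p - omega z)%:E.
Proof.
apply/le_anti/andP; split; last exact: fconj_ge_hopf.
apply: fconj_le => w; apply/ler_addgt0Pr => e e0.
have e30 : 0 < e / 3 by rewrite divr_gt0.
have [rG rG0 near_G] := G_continuous HC1 t1T p e30.
have [r r0 near_p] := dotv_near (z - w) p e30.
have min0 : 0 < Num.min rG r by rewrite lt_min rG0.
have [q [pq Fq]] := p_cluster e30 min0.
move: pq; rewrite lt_min => /andP[pq_G pq_r].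
have [s [Sq lt_s]] := hopf_objective_gt Fq.
have := fconj_ge sigma q w; rewrite Sq lee_fin.
have := near_G q pq_G; have := near_p q pq_r.
rewrite !ler_norml !dotvBl !(dotvC w) => /andP[_ +] /andP[_ +]; lra.
Qed.

Let y := z - voint 0 t1 (fun tau => Hp tau p).

(* [S - <z, .> + G] is minimal at [p] and [G] has directional derivative
   [<\int Hp(., p), .>] there, so [y] is a subgradient of the convex [S] at [p]. *)
Lemma cluster_fconj_subgradient q sq : S q = sq%:E ->
  dotv y (q - p) <= sq - (dotv z p - G p - omega z).
Proof.
move=> Sq; set sp := dotv z p - G p - omega z; set d := q - p.
set D := dotv (voint 0 t1 (fun tau => Hp tau p)) d.
have -> : dotv y d = dotv z d - D by rewrite /y dotvBl.
apply/ler_addgt0Pr => e e0.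
have [dl dl0 G_diff] := G_directional HC1 t1T p d e0.
pose s := Num.min (dl / 2) 1.
have s0 : 0 < s by rewrite lt_min ltr01 andbT divr_gt0.
have s1 : s <= 1 by rewrite ge_min lexx orbT.
have sdl : s < dl by rewrite gt_min; apply/orP; left; lra.
have := G_diff s; rewrite s0 sdl => /(_ isT); rewrite ler_norml -/D => /andP[_ G_up].
have S_convex : (S (p + s *: d) <= ((1 - s) * sp + s * sq)%:E)%E.
  apply: fconj_le => w.
  have := fconj_ge sigma p w; rewrite cluster_fconj lee_fin -/sp => le_sp.
  have := fconj_ge sigma q w; rewrite Sq lee_fin => le_sq.
  have -> : dotv (p + s *: d) w = (1 - s) * dotv p w + s * dotv q w.
    by rewrite dotvDl dotvZl /d dotvBl; ring.
  have : (1 - s) * (dotv p w - sigma w) <= (1 - s) * sp.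
    by apply: ler_wpM2l; rewrite ?subr_ge0.
  have : s * (dotv q w - sigma w) <= s * sq by apply: ler_wpM2l => //; exact: ltW.
  lra.
have := le_trans (fconj_ge_hopf hopf_omega z (p + s *: d)) S_convex.
rewrite lee_fin dotvDr dotvZr => S_line.
rewrite -(ler_pM2l s0); move: S_line; rewrite /sp; lra.
Qed.

Lemma cluster_Dsigma : p = Dsigma y.
Proof.
have Sg := fconj_gradient sigma_convex (sigma_C1.1 y).
have := cluster_fconj_subgradient Sg => y_subgrad.
apply: (subgradient_gradient (sigma_C1.1 y)) => w.
have := fconj_ge sigma p w; rewrite cluster_fconj lee_fin.
move: y_subgrad; rewrite [dotv y _]dotvBr [dotv p (w - y)]dotvBr.
by rewrite (dotvC y (Dsigma y)) (dotvC y p); lra.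
Qed.

End HopfClusterPoint.

Lemma char_sigma_chasles (R : realType) (n : nat) (T : R) (H : R -> 'rV[R]_n -> R)
    (Hp : R -> 'rV[R]_n -> 'rV[R]_n) (Dsigma : 'rV[R]_n -> 'rV[R]_n) y s t :
  C1_strip T H Hp -> 0 <= s <= T -> 0 <= t <= T ->
  char_sigma Hp Dsigma y t =
    char_sigma Hp Dsigma y s + voint s t (fun tau => Hp tau (Dsigma y)).
Proof.
move=> HC1 sT tT; rewrite /char_sigma -addrA (voint_chasles (T := T) _ _ sT) //.
  by move=> i; exact: (C1_strip_Hp_entry_continuous (p := Dsigma y) (i := i) HC1).
by rewrite lexx; case/andP: sT => s0 /(le_trans s0).
Qed.

Theorem theorem4p3 (R : realType) (n : nat) (T t1 : R)
  (H : R -> 'rV[R]_n -> R) (Hp : R -> 'rV[R]_n -> 'rV[R]_n)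
  (sigma : 'rV[R]_n -> R) (Dsigma : 'rV[R]_n -> 'rV[R]_n)
  (omega : 'rV[R]_n -> R) (Domega : 'rV[R]_n -> 'rV[R]_n) :
  0 < T ->
  C1_strip T H Hp ->
  C1_grad sigma Dsigma -> convex_fun sigma -> lipschitz_fun sigma ->
  0 < t1 < T ->
  (forall x, hopf sigma H t1 x = (omega x)%:E) ->
  C1_grad omega Domega ->
  (* (1) *)
  (forall z : 'rV[R]_n,
     let y := z - voint 0 t1 (fun tau => Hp tau (Domega z)) in
     forall t, 0 <= t <= T ->
       char_omega Hp Domega t1 z t = char_sigma Hp Dsigma y t) /\
  (* (2) *)
  (forall y : 'rV[R]_n,
     let x1 := char_sigma Hp Dsigma y t1 in
     ell sigma H t1 x1 (Dsigma y) ->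
     forall t, t1 <= t <= T ->
       char_sigma Hp Dsigma y t = char_omega Hp Domega t1 x1 t).
Proof.
move=> _ HC1 sigma_C1 sigma_convex sigma_lip /andP[t1_gt0 t1_lt_T] hopf_omega omega_C1.
have t1T : 0 < t1 <= T by rewrite t1_gt0 ltW.
have t1_in : 0 <= t1 <= T by rewrite !ltW.
split=> [z y t tT | y x1 ell_y t /andP[t1t tT]].
  have [p p_cluster] := hopf_cluster_point sigma_lip hopf_omega z.
  have Dz := cluster_Domega hopf_omega omega_C1 p_cluster.
  have Dy := cluster_Dsigma HC1 t1T sigma_C1 sigma_convex hopf_omega p_cluster.
  rewrite (char_sigma_chasles _ y HC1 t1_in tT) /char_sigma /char_omega /y -Dz -Dy.
  by rewrite subrK.
have Dy := subgradient_gradient (omega_C1.1 x1) (ell_subgradient hopf_omega ell_y).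
rewrite (char_sigma_chasles _ y HC1 t1_in) /char_omega -?Dy //.
by rewrite tT (le_trans (ltW t1_gt0) t1t).
Qed.
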